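(* Let $\alpha\neq\beta$, let $(g_n)$ be as in the context, set $w=\dfrac{\beta-x}{\beta-\alpha}$ and $\Phi(y)=\dfrac{(\alpha-\beta)yw+\beta}{1-yw}$. Let $y=y(t)$ be the unique formal power series in $t$ with $y(0)=0$ satisfying $y=t\,\Phi(y)$. Then for all $n\ge0$, $$g_n(x)=[t^n]\,\frac{1}{1-y(t)},\qquad\text{i.e.}\qquad \sum_{n\ge0}g_n(x)\,t^n=\frac{1}{1-y(t)}.$$
   Context: Fix complex numbers $\alpha\neq\beta$. Define polynomials $g_n(x)\in\mathbb{C}[x]$ recursively by $g_0(x)=1$ and, for $n\ge1$, $$(x-\alpha)(\alpha-\beta)^{n-1}g_n(x)=\alpha(x-\beta)^n g_{n-1}(\alpha)-x(\alpha-\beta)^n g_{n-1}(x).$$ (The right-hand side vanishes at $x=\alpha$, so it is divisible by $x-\alpha$ and $g_n$ is a uniquely determined polynomial.) $[t^n]F(t)$ denotes the coefficient of $t^n$ in the formal power series $F$. *)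

From HB Require Import structures.
From mathcomp Require Import all_boot all_order all_algebra.
From mathcomp Require Import complex.
From mathcomp Require Import Rstruct.
Set Implicit Arguments. Unset Strict Implicit. Unset Printing Implicit Defensive.
Import Order.TTheory GRing.Theory Num.Theory.
Local Open Scope ring_scope.

Definition CC : Type := complex Rdefinitions.R.

Definition fps (F : Type) := nat -> F.

Section FPS.
Variable F : fieldType.

Definition fps_one : fps F := fun n => (n == 0%N)%:R.
Definition fps_t : fps F := fun n => (n == 1%N)%:R.
Definition fps_const (c : F) : fps F := fun n => if n is 0%N then c else 0.
Definition fps_mul (f g : fps F) : fps F :=
  fun n => \sum_(i < n.+1) f i * g (n - i)%N.

(** Coefficient lists of the multiplicative inverse of f (requires f 0 != 0):
    u_0 = (f_0)^-1,  u_m = - (f_0)^-1 * \sum_(i < m) f_(m-i) u_i. *)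
Fixpoint fps_inv_seq (f : fps F) (n : nat) : seq F :=
  match n with
  | 0%N => [:: (f 0%N)^-1]
  | m.+1 => let s := fps_inv_seq f m in
            rcons s (- (f 0%N)^-1 * \sum_(i < m.+1) f (m.+1 - i)%N * s`_i)
  end.
Definition fps_inv (f : fps F) : fps F := fun n => (fps_inv_seq f n)`_n.

End FPS.

(** The polynomials g_n:  g_0 = 1 and
    (x-a)(a-b)^(n-1) g_n(x) = a (x-b)^n g_(n-1)(a) - x (a-b)^n g_(n-1)(x). *)
Fixpoint gpoly (a b : CC) (n : nat) : {poly CC} :=
  match n with
  | 0%N => 1
  | m.+1 =>
      (a%:P * ('X - b%:P) ^+ m.+1 * ((gpoly a b m).[a])%:P
         - 'X * ((a - b) ^+ m.+1)%:P * gpoly a b m)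
      %/ (('X - a%:P) * ((a - b) ^+ m)%:P)
  end.

(* Write [y_w] for the solution of [y = t Phi(y)] with parameter [w], [c = a - b],
   and [h_w = 1/(1 - y_w)].  Clearing denominators, [Y = y_w(t)] satisfies
   [Y (1 - w Y) = t (c w Y + b)]; hence [u y_u(t)] and [y_1(u t)] solve the same
   quadratic and coincide.  A partial fraction identity between [h_u(t)] and
   [h_1(u t) = 1/(1 - u y_u(t))] then gives, at [t^(n+1)],
     [(u - 1) h_u[n+1] = a u^(n+1) h_1[n] - (b + c u) h_u[n]],
   which for [u = (b - x)/(b - a)] is the recurrence of [g_(n+1)(x)] multiplied by
   [c^(n+1)].  So [g_n(x) = h_u[n]] for [x <> a], and also at [x = a] because [h_u[n]]
   is a polynomial in [x].  Identities between power series are checked on their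
   truncations in [{poly F}] modulo [X^(N+1)], where ring laws are available. *)

From mathcomp Require Import all_boot all_order all_algebra.
From mathcomp Require Import complex.
From mathcomp Require Import Rstruct.
From mathcomp Require Import ring.
From Stdlib Require Import FunctionalExtensionality.
Import GRing.Theory Num.Theory.
Local Open Scope ring_scope.

Section PowerSeries.
Variable F : fieldType.
Implicit Types f g : fps F.

Lemma size_fps_inv_seq f n : size (fps_inv_seq f n) = n.+1.
Proof. by elim: n => [|n IH] //=; rewrite size_rcons IH. Qed.

Lemma nth_fps_inv_seq f n i : (i <= n)%N -> (fps_inv_seq f n)`_i = fps_inv f i.
Proof.
elim: n => [|n IH]; first by rewrite leqn0 => /eqP ->.
rewrite leq_eqVlt => /predU1P [-> // | lt_in].
by rewrite /= nth_rcons size_fps_inv_seq lt_in IH.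
Qed.

Lemma fps_invS f m :
  fps_inv f m.+1 = - (f 0%N)^-1 * \sum_(i < m.+1) f (m.+1 - i)%N * fps_inv f i.
Proof.
rewrite {1}/fps_inv /= nth_rcons size_fps_inv_seq ltnn eqxx.
by congr (_ * _); apply: eq_bigr => i _; rewrite nth_fps_inv_seq // -ltnS.
Qed.

Lemma fps_mulVf f : f 0%N != 0 -> fps_mul (fps_inv f) f = fps_one F.
Proof.
move=> f0_neq0; apply: functional_extensionality => -[|m].
  by rewrite /fps_mul big_ord1 mulVf.
rewrite /fps_mul big_ord_recr /= subnn fps_invS /fps_one /=.
under eq_bigr do rewrite mulrC.
by field.
Qed.

Lemma fps_mul_t0 f : fps_mul (fps_t F) f 0 = 0.
Proof. by rewrite /fps_mul big_ord1 mul0r. Qed.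

Lemma fps_mul_tS f k : fps_mul (fps_t F) f k.+1 = f k.
Proof.
rewrite /fps_mul 2!big_ord_recl /= mul0r add0r mul1r subn1.
by rewrite big1 ?addr0 // => i _; rewrite mul0r.
Qed.

Definition fps_eq_upto (k : nat) f g := forall i, (i <= k)%N -> f i = g i.

Lemma fps_eq_upto_le k k' f g :
  (k' <= k)%N -> fps_eq_upto k f g -> fps_eq_upto k' f g.
Proof. by move=> le_k'k fg i le_ik'; apply: fg; apply: leq_trans le_k'k. Qed.

Lemma fps_eq_upto_mul k f f' g g' : fps_eq_upto k f f' -> fps_eq_upto k g g' ->
  fps_eq_upto k (fps_mul f g) (fps_mul f' g').
Proof.
move=> ff' gg' i le_ik; apply: eq_bigr => j _.
have le_ji : (j <= i)%N by rewrite -ltnS.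
by rewrite ff' ?gg' ?(leq_trans (leq_subr _ _) le_ik) ?(leq_trans le_ji).
Qed.

Lemma fps_inv_seq_eq_upto n f g : fps_eq_upto n f g -> fps_inv_seq f n = fps_inv_seq g n.
Proof.
elim: n => [|n IH] fg /=; first by rewrite fg.
rewrite IH ?fg //; last exact: fps_eq_upto_le fg.
by congr (rcons _ (_ * _)); apply: eq_bigr => i _; rewrite fg // leq_subr.
Qed.

Lemma fps_eq_upto_inv k f g : fps_eq_upto k f g -> fps_eq_upto k (fps_inv f) (fps_inv g).
Proof.
move=> fg i le_ik; rewrite /fps_inv (@fps_inv_seq_eq_upto i f g) //.
exact: fps_eq_upto_le fg.
Qed.

(* For a causal [Phi] (the coefficients of [Phi y] up to [k] only depend on those
   of [y]), the [n]-th coefficient of the iterates of [tstep] is stable from the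
   [n.+1]-th iterate on; [tfix] collects these stable values. *)
Section TFixpoint.
Variable Phi : fps F -> fps F.
Hypothesis Phi_causal :
  forall k f g, fps_eq_upto k f g -> fps_eq_upto k (Phi f) (Phi g).

Definition tstep (y : fps F) : fps F := fps_mul (fps_t F) (Phi y).

Definition tfix : fps F := fun n => iter n.+1 tstep (fun _ => 0) n.

Lemma tstep_eq_upto k f g : fps_eq_upto k f g -> fps_eq_upto k.+1 (tstep f) (tstep g).
Proof.
move=> fg [|i] le_ik; first by rewrite /tstep !fps_mul_t0.
by rewrite /tstep !fps_mul_tS; apply: Phi_causal fg i le_ik.
Qed.

Lemma iter_tstep_eq_upto k m :
  fps_eq_upto k (iter (k + m).+1 tstep (fun _ => 0)) (iter k.+1 tstep (fun _ => 0)).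
Proof.
elim: k => [|k IH]; last by rewrite addSn !iterS; apply: tstep_eq_upto.
by move=> i; rewrite leqn0 => /eqP ->; rewrite !iterS /tstep !fps_mul_t0.
Qed.

Lemma tfix_eq_upto k : fps_eq_upto k tfix (iter k.+1 tstep (fun _ => 0)).
Proof.
move=> i le_ik; rewrite /tfix -(subnKC le_ik).
by rewrite (iter_tstep_eq_upto i (k - i)).
Qed.

Lemma tfix0 : tfix 0%N = 0.
Proof. exact: fps_mul_t0. Qed.

Lemma tfixE : tfix = tstep tfix.
Proof.
apply: functional_extensionality => -[|m]; first by rewrite tfix0 /tstep fps_mul_t0.
by symmetry; apply: (tstep_eq_upto _ _ _ (tfix_eq_upto m)) (leqnn _).
Qed.

Lemma tfix_uniq y : y 0%N = 0 -> y = tstep y -> y = tfix.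
Proof.
move=> y0 yE; apply: functional_extensionality => k.
suff: fps_eq_upto k y tfix by apply.
elim: k => [|k IH]; first by move=> i; rewrite leqn0 => /eqP ->; rewrite y0 tfix0.
by rewrite yE tfixE; apply: tstep_eq_upto.
Qed.

End TFixpoint.

Definition phi (c b w : F) (y : fps F) : fps F :=
  fps_mul (fun n => c * y n * w + fps_const b n)
          (fps_inv (fun n => fps_one F n - y n * w)).

Lemma phi_causal c b w k f g :
  fps_eq_upto k f g -> fps_eq_upto k (phi c b w f) (phi c b w g).
Proof.
move=> fg; apply: fps_eq_upto_mul; first by move=> i /fg ->.
by apply: fps_eq_upto_inv => i /fg ->.
Qed.

Definition phi_sol (c b w : F) : fps F := tfix (phi c b w).

Definition gseries (a b w : F) : fps F :=
  fps_inv (fun n => fps_one F n - phi_sol (a - b) b w n).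

End PowerSeries.

Arguments fps_eq_upto {F}.
Arguments tstep {F}.
Arguments tfix {F}.
Arguments phi {F}.
Arguments phi_sol {F}.
Arguments gseries {F}.

Section Truncation.
Variable F : fieldType.
Implicit Types (f g : fps F) (p q : {poly F}).

Lemma dvdXnP n p : reflect (forall k, (k < n)%N -> p`_k = 0) ('X^n %| p).
Proof.
rewrite /dvdp -Pdiv.IdomainMonic.take_poly_modp.
apply: (iffP eqP) => [p_n0 k lt_kn | p_n0].
  by have := coef_take_poly n p k; rewrite lt_kn p_n0 coef0.
by apply/polyP => k; rewrite coef_take_poly coef0; case: ifP => // /p_n0.
Qed.

Lemma dvdXn_mulr n p q : q`_0 != 0 -> ('X^n %| p * q) = ('X^n %| p).
Proof.
move=> q0; apply: Gauss_dvdpl; rewrite coprimep_sym coprimep_expr //.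
by rewrite coprimepX rootE horner_coef0.
Qed.

(* The truncation of [f (s t)] modulo [t ^ N.+1]. *)
Definition fps_trunc N s f : {poly F} := \poly_(i < N.+1) (s ^+ i * f i).

Lemma coef_fps_trunc N s f k : (k <= N)%N -> (fps_trunc N s f)`_k = s ^+ k * f k.
Proof. by move=> le_kN; rewrite coef_poly ltnS le_kN. Qed.

Lemma coef0_fps_trunc N s f : (fps_trunc N s f)`_0 = f 0%N.
Proof. by rewrite coef_fps_trunc // mul1r. Qed.

Lemma fps_trunc_one N s : fps_trunc N s (fps_one F) = 1.
Proof.
apply/polyP => k; rewrite coef_poly coef1 /fps_one.
by case: k => [|k] /=; rewrite ?mulr1 ?mulr0 ?if_same.
Qed.

Lemma fps_trunc_affine N s e b f g : (forall n, g n = e * f n + fps_const b n) ->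
  fps_trunc N s g = e%:P * fps_trunc N s f + b%:P.
Proof.
move=> gE; apply/polyP => k; rewrite coefD coefCM coefC !coef_poly gE.
case: k => [|k] /=; first by rewrite expr0; ring.
by case: ifP => _; ring.
Qed.

Lemma fps_trunc_mul N s f g :
  'X^(N.+1) %| fps_trunc N s (fps_mul f g) - fps_trunc N s f * fps_trunc N s g.
Proof.
apply/dvdXnP => k; rewrite ltnS => le_kN.
rewrite coefB coef_fps_trunc // coefM /fps_mul mulr_sumr -sumrB big1 // => j _.
have le_jk : (j <= k)%N by rewrite -ltnS.
rewrite !coef_fps_trunc ?(leq_trans le_jk) ?(leq_trans (leq_subr _ _)) //.
by rewrite -{1}(subnKC le_jk) exprD; ring.
Qed.

Lemma fps_trunc_t N s : 'X^(N.+1) %| fps_trunc N s (fps_t F) - s%:P * 'X.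
Proof.
apply/dvdXnP => k lt_kN; rewrite coefB coef_poly lt_kN coefCM coefX /fps_t.
by case: k {lt_kN} => [|[|k]] /=; rewrite ?expr1 ?mulr0 ?mulr1 ?subrr.
Qed.

Lemma fps_trunc_mulV N s f : f 0%N != 0 ->
  'X^(N.+1) %| fps_trunc N s (fps_inv f) * fps_trunc N s f - 1.
Proof.
move=> f0; rewrite -(fps_trunc_one N s) -(@fps_mulVf F f f0) -opprB dvdpNr.
exact: fps_trunc_mul.
Qed.

End Truncation.

Arguments fps_trunc {F}.

Section Recurrence.
Variable F : fieldType.

Lemma phi_sol0 (c b w : F) : phi_sol c b w 0%N = 0.
Proof. exact: tfix0. Qed.

Lemma phi_solE (c b w : F) :
  phi_sol c b w = fps_mul (fps_t F) (phi c b w (phi_sol c b w)).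
Proof. exact: (@tfixE F _ (@phi_causal F c b w)). Qed.

Lemma phi_sol_uniq (c b w : F) y : y 0%N = 0 ->
  y = fps_mul (fps_t F) (phi c b w y) -> y = phi_sol c b w.
Proof. exact: (@tfix_uniq F _ (@phi_causal F c b w)). Qed.

Lemma fps_trunc_oneB N (s e : F) f g : (forall n, g n = fps_one F n - e * f n) ->
  fps_trunc N s g = 1 - e%:P * fps_trunc N s f.
Proof.
move=> gE; rewrite (@fps_trunc_affine F N s (- e) 1 f g) ?polyCN ?polyC1.
  by rewrite mulNr addrC.
by move=> [|n]; rewrite gE /fps_one /=; ring.
Qed.

Lemma phi_sol_quadratic N (s c b w : F) :
  'X^(N.+1) %| fps_trunc N s (phi_sol c b w) * (1 - w%:P * fps_trunc N s (phi_sol c b w))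
             - s%:P * 'X * ((c * w)%:P * fps_trunc N s (phi_sol c b w) + b%:P).
Proof.
set y := phi_sol c b w; set Y := fps_trunc N s y.
set I := fps_inv (fun n => fps_one F n - y n * w).
set A := (c * w)%:P * Y + b%:P.
have I_inv : 'X^(N.+1) %| fps_trunc N s I * (1 - w%:P * Y) - 1.
  rewrite -(@fps_trunc_oneB N s w y (fun n => fps_one F n - y n * w)).
    by apply: fps_trunc_mulV; rewrite /y phi_sol0 mul0r subr0 oner_neq0.
  by move=> n; rewrite mulrC.
have num : fps_trunc N s (fun n => c * y n * w + fps_const b n) = A.
  by apply: fps_trunc_affine => n; rewrite mulrAC.
set P := fps_trunc N s (phi c b w y).
have YE : 'X^(N.+1) %| Y - fps_trunc N s (fps_t F) * P.
  by rewrite /Y /y {1}phi_solE; apply: fps_trunc_mul.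
have PE : 'X^(N.+1) %| P - A * fps_trunc N s I.
  by rewrite -num; apply: fps_trunc_mul.
have tE := @fps_trunc_t F N s.
have -> : Y * (1 - w%:P * Y) - s%:P * 'X * A =
    (Y - fps_trunc N s (fps_t F) * P) * (1 - w%:P * Y)
    + P * (fps_trunc N s (fps_t F) - s%:P * 'X) * (1 - w%:P * Y)
    + s%:P * 'X * (P - A * fps_trunc N s I) * (1 - w%:P * Y)
    + s%:P * 'X * A * (fps_trunc N s I * (1 - w%:P * Y) - 1).
  by ring.
by repeat apply: dvdp_add; auto using dvdp_mull, dvdp_mulr.
Qed.

Lemma gseries_trunc_mulV N (s a b w : F) :
  'X^(N.+1) %| fps_trunc N s (gseries a b w)
               * (1 - fps_trunc N s (phi_sol (a - b) b w)) - 1.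
Proof.
rewrite -[fps_trunc N s (phi_sol _ _ _)]mul1r -polyC1.
rewrite -(@fps_trunc_oneB N s 1 _ (fun n => fps_one F n - phi_sol (a - b) b w n)).
  by apply: fps_trunc_mulV; rewrite phi_sol0 subr0 oner_neq0.
by move=> n; rewrite mul1r.
Qed.

(* [u y_u(t)] and [y_1(u t)] solve the same quadratic [X (1 - X) = u t (c X + b)],
   and the two roots of it differ by a series with constant term [1]. *)
Lemma phi_sol_scale N (c b u : F) :
  'X^(N.+1) %| u%:P * fps_trunc N 1 (phi_sol c b u) - fps_trunc N u (phi_sol c b 1).
Proof.
have qY := phi_sol_quadratic N 1 c b u.
have qZ := phi_sol_quadratic N u c b 1.
have Y0 : (fps_trunc N 1 (phi_sol c b u))`_0 = 0 by rewrite coef0_fps_trunc phi_sol0.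
have Z0 : (fps_trunc N u (phi_sol c b 1))`_0 = 0 by rewrite coef0_fps_trunc phi_sol0.
set Y := fps_trunc N 1 (phi_sol c b u) in qY Y0 *.
set Z := fps_trunc N u (phi_sol c b 1) in qZ Z0 *.
rewrite polyC1 mul1r in qY; rewrite polyC1 mul1r mulr1 in qZ.
rewrite -(@dvdXn_mulr F _ _ (1 - u%:P * Y - Z - (u * c)%:P * 'X)); last first.
  by rewrite !coefB coef1 coefCM Y0 Z0 coefCM coefX !mulr0 !subr0 oner_neq0.
have -> : (u%:P * Y - Z) * (1 - u%:P * Y - Z - (u * c)%:P * 'X) =
    u%:P * (Y * (1 - u%:P * Y) - 'X * ((c * u)%:P * Y + b%:P))
    - (Z * (1 - Z) - u%:P * 'X * (c%:P * Z + b%:P)).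
  by rewrite !polyCM; ring.
by apply: dvdp_sub; first apply: dvdp_mull.
Qed.

(* Partial fractions: for [Y = y_u(t)] and [x = b + (a - b) u], the quadratic
   equation of [Y] gives [(u - 1) (1/(1 - Y) - 1) = t (a u / (1 - u Y) - x / (1 - Y))]. *)
Lemma gseries_rec (a b u : F) n :
  (u - 1) * gseries a b u n.+1
  = a * u ^+ n.+1 * gseries a b 1 n - (b + (a - b) * u) * gseries a b u n.
Proof.
set c := a - b; set N := n.+1.
have qY := phi_sol_quadratic N 1 c b u.
have ZE := phi_sol_scale N c b u.
have hY := gseries_trunc_mulV N 1 a b u.
have hZ := gseries_trunc_mulV N u a b 1.
have Y0 : (fps_trunc N 1 (phi_sol c b u))`_0 = 0 by rewrite coef0_fps_trunc phi_sol0.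
set Y := fps_trunc N 1 (phi_sol c b u) in qY ZE hY Y0.
set Z := fps_trunc N u (phi_sol c b 1) in ZE hZ.
set Th := fps_trunc N 1 (gseries a b u) in hY.
set G := fps_trunc N u (gseries a b 1) in hZ.
rewrite polyC1 mul1r in qY.
have GY : 'X^(N.+1) %| G * (1 - u%:P * Y) - 1.
  have -> : G * (1 - u%:P * Y) - 1 = (G * (1 - Z) - 1) - G * (u%:P * Y - Z) by ring.
  by apply: dvdp_sub; last apply: dvdp_mull.
set x := b + c * u.
set E := (u - 1)%:P * (Th - 1) - ((a * u)%:P * ('X * G) - x%:P * ('X * Th)).
have /dvdXnP/(_ N (ltnSn N)) : 'X^(N.+1) %| E.
  rewrite -(@dvdXn_mulr F _ _ ((1 - Y) * (1 - u%:P * Y))); last first.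
    by rewrite coefM big_ord1 !coefB coef1 coefCM Y0 mulr0 !subr0 mulr1 oner_neq0.
  have -> : E * ((1 - Y) * (1 - u%:P * Y)) =
      ((u - 1)%:P + x%:P * 'X) * (1 - u%:P * Y) * (Th * (1 - Y) - 1)
      - (a * u)%:P * 'X * (1 - Y) * (G * (1 - u%:P * Y) - 1)
      + (u - 1)%:P * (Y * (1 - u%:P * Y) - 'X * ((c * u)%:P * Y + b%:P)).
    by rewrite /E /x /c !(polyCM, polyCB, polyCD) polyC1; ring.
  by apply: dvdp_add; first apply: dvdp_sub; auto using dvdp_mull.
rewrite !coefB !coefCM !coefXM /= coefB coef1 /Th /G /N /=.
rewrite !coef_fps_trunc ?leqnn ?leqnSn // !expr1n !mul1r => E_N.
by apply: subr0_eq; rewrite -[RHS]E_N subr0 exprS; ring.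
Qed.

End Recurrence.

Section PolynomialDependence.
Variable F : fieldType.

Definition polyfun (g : F -> F) := exists p : {poly F}, forall w, g w = p.[w].

Definition polyfun_fps (f : F -> fps F) := forall k, polyfun (fun w => f w k).

Lemma polyfun_const k : polyfun (fun=> k).
Proof. by exists k%:P => w; rewrite hornerC. Qed.

Lemma polyfun_id : polyfun id.
Proof. by exists 'X => w; rewrite hornerX. Qed.

Lemma polyfun_sub g h : polyfun g -> polyfun h -> polyfun (fun w => g w - h w).
Proof. by move=> [p gp] [q hq]; exists (p - q) => w; rewrite hornerD hornerN gp hq. Qed.

Lemma polyfun_add g h : polyfun g -> polyfun h -> polyfun (fun w => g w + h w).
Proof. by move=> [p gp] [q hq]; exists (p + q) => w; rewrite hornerD gp hq. Qed.

Lemma polyfun_mul g h : polyfun g -> polyfun h -> polyfun (fun w => g w * h w).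
Proof. by move=> [p gp] [q hq]; exists (p * q) => w; rewrite hornerM gp hq. Qed.

Lemma polyfun_sum n (g : 'I_n -> F -> F) :
  (forall i, polyfun (g i)) -> polyfun (fun w => \sum_(i < n) g i w).
Proof.
move=> /fin_all_exists [p gp]; exists (\sum_(i < n) p i) => w.
by rewrite horner_sum; apply: eq_bigr => i _; rewrite gp.
Qed.

Lemma polyfun_fps_mul f g : polyfun_fps f -> polyfun_fps g ->
  polyfun_fps (fun w => fps_mul (f w) (g w)).
Proof. by move=> pf pg k; apply: polyfun_sum => i; apply: polyfun_mul. Qed.

Lemma polyfun_fps_inv f : polyfun_fps f -> (forall w, f w 0%N = 1) ->
  polyfun_fps (fun w => fps_inv (f w)).
Proof.
move=> pf f0; elim/ltn_ind => -[_ | m IH].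
  by exists 1 => w; rewrite hornerC /fps_inv /= f0 invr1.
have [p fp] : polyfun (fun w => - 1 * \sum_(i < m.+1) f w (m.+1 - i)%N * fps_inv (f w) i).
  by apply/polyfun_mul/polyfun_sum => [|i]; [apply: polyfun_const | apply/polyfun_mul/IH].
by exists p => w; rewrite fps_invS f0 invr1 fp.
Qed.

Lemma iter_tstep0 Phi m : iter m (@tstep F Phi) (fun=> 0) 0%N = 0.
Proof. by case: m => [|m] //=; apply: fps_mul_t0. Qed.

Lemma polyfun_phi_sol c b : polyfun_fps (fun w => phi_sol c b w).
Proof.
have iterP m : polyfun_fps (fun w => iter m (tstep (phi c b w)) (fun=> 0)).
  elim: m => [|m IH] /=; first by move=> k; apply: polyfun_const.
  apply: polyfun_fps_mul; first by move=> k; apply: polyfun_const.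
  apply: polyfun_fps_mul => [k|].
    apply: polyfun_add; last exact: polyfun_const.
    by apply/polyfun_mul/polyfun_id/polyfun_mul/IH/polyfun_const.
  apply: polyfun_fps_inv => [k|w]; last by rewrite iter_tstep0 mul0r subr0.
  by apply/polyfun_sub/polyfun_mul/polyfun_id/IH/polyfun_const.
by move=> k; apply: iterP.
Qed.

Lemma polyfun_gseries a b n : polyfun (fun w => gseries a b w n).
Proof.
apply: polyfun_fps_inv => [k|w]; last by rewrite phi_sol0 subr0.
by apply/polyfun_sub/polyfun_phi_sol/polyfun_const.
Qed.

End PolynomialDependence.

Arguments polyfun {F}.

Lemma poly_eq_off_point (R : numDomainType) (p q : {poly R}) (a : R) :
  (forall z, z != a -> p.[z] = q.[z]) -> p = q.
Proof.
move=> pq; apply/eqP; rewrite -subr_eq0; apply/eqP.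
apply: (@roots_geq_poly_eq0 _ _ [seq a + i.+1%:R | i <- iota 0 (size (p - q))]).
- apply/allP => _ /mapP [i _ ->]; rewrite rootE hornerD hornerN pq ?subrr //.
  by rewrite -subr_eq0 addrAC subrr add0r pnatr_eq0.
- by rewrite map_inj_uniq ?iota_uniq // => i j /addrI /eqP; rewrite eqr_nat => /eqP [].
- by rewrite size_map size_iota.
Qed.

(* [gpoly a b m.+1] is an exact quotient: its numerator vanishes at [a]. *)
Lemma horner_gpolyS (a b : CC) m z : a != b ->
  (z - a) * (a - b) ^+ m * (gpoly a b m.+1).[z]
  = a * (z - b) ^+ m.+1 * (gpoly a b m).[a] - z * (a - b) ^+ m.+1 * (gpoly a b m).[z].
Proof.
move=> ab; have cm_neq0 : (a - b) ^+ m != 0 by rewrite expf_neq0 // subr_eq0.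
rewrite /=; set num := (X in X %/ _); set den := (X in _ %/ X).
have den_num : den %| num.
  rewrite /den mulrC mul_polyC dvdpZl // dvdp_XsubCl rootE /num.
  by rewrite !hornerE subrr.
have : (num %/ den).[z] * den.[z] = num.[z] by rewrite -hornerM divpK.
by rewrite /den /num !hornerE => <- /=; rewrite mulrC mulrA.
Qed.

Lemma horner_gpoly (a b : CC) n z : a != b ->
  (gpoly a b n).[z] = gseries a b ((b - z) / (b - a)) n.
Proof.
move=> ab; have ba : b - a != 0 by rewrite subr_eq0 eq_sym.
elim: n z => [|m IH] z.
  by rewrite hornerC /gseries /fps_inv /= phi_sol0 subr0 invr1.
have [p hp] : polyfun (fun z => gseries a b ((b - z) / (b - a)) m.+1).
  have [q hq] := @polyfun_gseries _ a b m.+1.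
  exists (q \Po ((b%:P - 'X) * ((b - a)^-1)%:P)) => w.
  by rewrite horner_comp hq !hornerE.
suff -> : gpoly a b m.+1 = p by rewrite -hp.
apply: (@poly_eq_off_point _ _ _ a) => {}z za; rewrite -hp.
set u := (b - z) / (b - a).
have cu : z - b = (a - b) * u by rewrite /u; field.
have cu1 : z - a = (a - b) * (u - 1) by rewrite /u; field.
have rec := @gseries_rec _ a b u m.
rewrite (_ : b + (a - b) * u = z) in rec; last by rewrite -cu; ring.
have /mulfI : (z - a) * (a - b) ^+ m != 0.
  by rewrite mulf_neq0 ?expf_neq0 // subr_eq0 // eq_sym.
apply; rewrite horner_gpolyS // !IH divff // -/u cu cu1.
transitivity ((a - b) ^+ m.+1 * ((u - 1) * gseries a b u m.+1)).
  by rewrite rec exprMn; ring.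
by rewrite exprS; ring.
Qed.

Theorem mainTheorem6 (a b x : CC) : a != b ->
  let w : CC := (b - x) / (b - a) in
  let Phi := fun y : fps CC =>
    fps_mul (fun n => (a - b) * y n * w + fps_const b n)
            (fps_inv (fun n => fps_one CC n - y n * w)) in
  exists y : fps CC,
    [/\ y 0%N = 0,
        y = fps_mul (fps_t CC) (Phi y),
        (forall y' : fps CC, y' 0%N = 0 -> y' = fps_mul (fps_t CC) (Phi y') -> y' = y)
      & forall n : nat, (gpoly a b n).[x] = fps_inv (fun k => fps_one CC k - y k) n].
Proof.
move=> ab w Phi; exists (phi_sol (a - b) b w); split.
- exact: phi_sol0.
- exact: phi_solE.
- exact: phi_sol_uniq.
- by move=> n; apply: horner_gpoly.
Qed.
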